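(* Let $G$ be a finite simple graph with edge ideal $I=I(G)$, fix a total order $L_1>L_2>\dots>L_k$ on the edges (minimal monomial generators) of $I$, and for each $n\geq 1$ let $L^{(n)}_1>L^{(n)}_2>\cdots$ be the minimal monomial generators of $I^n$ in the order described in the context. Then for every $n\geq1$, every $k'\geq1$ and every $j\leq k'$: if $(L^{(n)}_j : L^{(n)}_{k'+1})$ is not contained in $(I^{n+1}:L^{(n)}_{k'+1})$ and $L^{(n)}_j$ belongs to an edge that comes (strictly) before the edge that $L^{(n)}_{k'+1}$ belongs to, then there exists $i\leq k'$ such that $(L^{(n)}_i : L^{(n)}_{k'+1})$ is generated by a single variable, $(L^{(n)}_j : L^{(n)}_{k'+1})\subseteq (L^{(n)}_i : L^{(n)}_{k'+1})$, and $L^{(n)}_i$ belongs to an edge that comes before or is equal to the edge that $L^{(n)}_j$ belongs to.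
   Context: $S=K[\,x : x\in V(G)\,]$ is the polynomial ring over a field $K$ on the vertices and $I(G)=(xy : xy\text{ an edge})$. For monomials $m,m'$, $(m:m')$ denotes $((m):(m'))$. Ordering: each minimal monomial generator $M$ of $I^n$ can be written as $L_1^{a_1}\cdots L_k^{a_k}$ with $\sum a_i=n$; its maximal expression is the lexicographically largest such exponent vector. For minimal generators $M,N$ of $I^n$, $M>N$ iff the maximal expression of $M$ is lexicographically larger than that of $N$; for $n=1$ this is the fixed order. $L^{(n)}_1>L^{(n)}_2>\cdots$ lists all minimal monomial generators of $I^n$ decreasingly. The edge $L_a$ comes before $L_b$ if $a<b$. For $n\geq2$ and monomials $m_1\in\mathrm{Mingens}(I^{p})$, $m_2\in\mathrm{Mingens}(I^n)$ with $n>p$, write $m_1\mid^{\mathrm{edge}} m_2$ if $m_2=m_1m_3$ for some minimal monomial generator $m_3$ of $I^{n-p}$. A minimal generator $m$ of $I^n$, $n\ge2$, belongs to the edge $L_i$ if $i$ is the least index with $L_i\mid^{\mathrm{edge}} m$; for $n=1$, $L_i$ belongs to $L_i$. *)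

(* Monomials of S = K[x : x in V] are exponent vectors
   V -> nat; a monomial ideal is represented by the set of monomials it
   contains (it is determined by them). *)
From mathcomp Require Import all_boot.
Set Implicit Arguments. Unset Strict Implicit. Unset Printing Implicit Defensive.

Section Defs.
Variable V : finType.

Definition mono := {ffun V -> nat}.
Definition mone : mono := [ffun _ => 0].
Definition mmul (a b : mono) : mono := [ffun v => a v + b v].
Definition mdvd (a b : mono) : Prop := forall v, a v <= b v.
Definition mvar (x : V) : mono := [ffun v => nat_of_bool (v == x)].

Definition mono_ideal := mono -> Prop.
Definition principal (u : mono) : mono_ideal := fun w => mdvd u w.
Definition colon (J : mono_ideal) (m : mono) : mono_ideal := fun w => J (mmul w m).
Definition msubset (J1 J2 : mono_ideal) : Prop := forall w, J1 w -> J2 w.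
Definition gen_by_var (J : mono_ideal) : Prop :=
  exists x, forall w, J w <-> principal (mvar x) w.
Definition colon_mm (m m' : mono) : mono_ideal := colon (principal m) m'.

Definition simple_graph (e : rel V) : Prop := irreflexive e /\ symmetric e.
Definition is_edge (e : rel V) (S : {set V}) : Prop :=
  exists x y, e x y /\ S = [set x; y].
(* L = [:: L_1; ...; L_k] lists all edges exactly once, L_1 > L_2 > ... *)
Definition edge_order (e : rel V) (L : seq {set V}) : Prop :=
  uniq L /\ forall S, S \in L <-> is_edge e S.
Definition edge_mono (S : {set V}) : mono := [ffun v => nat_of_bool (v \in S)].
(* 1-based edge L_i *)
Definition Ledge (L : seq {set V}) (i : nat) : mono := edge_mono (nth set0 L i.-1).

Definition prod_expr (L : seq {set V}) (a : seq nat) : mono :=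
  [ffun v => \sum_(i < size L) nth 0 a i * nat_of_bool (v \in nth set0 L i)].

Definition pow_ideal (L : seq {set V}) (n : nat) : mono_ideal :=
  fun m => exists a : seq nat,
    [/\ size a = size L, sumn a = n & mdvd (prod_expr L a) m].
Definition mingen (L : seq {set V}) (n : nat) (m : mono) : Prop :=
  pow_ideal L n m /\ forall m', pow_ideal L n m' -> mdvd m' m -> m' = m.

Fixpoint lexlt (a b : seq nat) : bool :=
  match a, b with
  | x :: a', y :: b' => (x < y) || ((x == y) && lexlt a' b')
  | _, _ => false
  end.

Definition is_expr (L : seq {set V}) (n : nat) (m : mono) (a : seq nat) : Prop :=
  [/\ size a = size L, sumn a = n & prod_expr L a = m].
Definition max_expr L n m a : Prop :=
  is_expr L n m a /\ forall b, is_expr L n m b -> ~~ lexlt a b.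
Definition gtM (L : seq {set V}) (n : nat) (M N : mono) : Prop :=
  exists a b, [/\ max_expr L n M a, max_expr L n N b & lexlt b a].

Definition gens_list (L : seq {set V}) (n : nat) (s : seq mono) : Prop :=
  [/\ uniq s, (forall m, m \in s <-> mingen L n m) &
      forall i j, i < j < size s -> gtM L n (nth mone s i) (nth mone s j)].
(* 1-based access L^(n)_j *)
Definition Lg (s : seq mono) (j : nat) : mono := nth mone s j.-1.

Definition edge_dvd L (p : nat) (m1 : mono) (n : nat) (m2 : mono) : Prop :=
  [/\ mingen L p m1, mingen L n m2 &
      exists m3, mingen L (n - p) m3 /\ m2 = mmul m1 m3].

Definition belongs (L : seq {set V}) (n : nat) (m : mono) (i : nat) : Prop :=
  1 <= i <= size L /\
  if n == 1 then m = Ledge L i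
  else edge_dvd L 1 (Ledge L i) n m /\
       forall i', 1 <= i' < i -> ~ edge_dvd L 1 (Ledge L i') n m.

End Defs.

(* Write N = L^(n)_j = L_a G and M = L^(n)_(k'+1), with L_a = pq the edge N belongs to and
   G a product of n-1 edges.  Comparing M with pq G and peeling off edges one at a time
   (induction on n, [edge_prod_exchange]) gives three alternatives:
   - M xy divides lcm(N, M) for vertices x, y with M xy in I^(n+1); then (N : M) is
     contained in (I^(n+1) : M), contrary to the hypothesis;
   - M = pq G' with G' a product of n-1 edges; then M would belong to L_a or an earlier
     edge, contrary to a < b;
   - M x = pq G' z with x <> z and M_x < N_x.  Then L0 = pq G' satisfies (L0 : M) = (x),
     which contains (N : M), L0 belongs to an edge no later than L_a, and L0 > M: the
     maximal expression of L0 is lexicographically at least an expression using L_a,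
     while the maximal expression of M vanishes on all edges before L_b. *)

From mathcomp Require Import all_boot zify.
From Stdlib Require Import Classical Wf_nat.
Set Implicit Arguments. Unset Strict Implicit. Unset Printing Implicit Defensive.

Lemma lexlt_shift (x y z : seq nat) t j :
  lexlt x y -> (forall k, k < t -> nth 0 y k = 0) -> j < t -> 0 < nth 0 z j ->
  lexlt x z.
Proof.
elim: x y z t j => [|x0 x IH] [|y0 y] [|z0 z] t j //=; first by rewrite nth_nil.
move=> + y0_0 lt_jt; have -> : y0 = 0 by apply: (y0_0 0); lia.
rewrite ltn0 /= => /andP [/eqP -> lt_xy'] z_pos.
case: j lt_jt z_pos => [|j] lt_jt z_pos /=; first by rewrite z_pos.
case: (posnP z0) => [->|] //=.
by apply: (IH y z t.-1 j lt_xy') => // [k lt_kt|]; [apply: (y0_0 k.+1) | ]; lia.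
Qed.

Lemma sumn_incr_nth (a : seq nat) i : sumn (incr_nth a i) = (sumn a).+1.
Proof.
elim: a i => [|x a IH] [|i] //=; last by rewrite IH addnS.
by elim: i => //= i ->.
Qed.

Lemma incr_nth_pred (a : seq nat) i : 0 < nth 0 a i ->
  exists2 a', size a' = size a & a = incr_nth a' i.
Proof.
elim: a i => [|x a IH] [|i] //=; first by case: x => [|x] // _; exists (x :: a).
by case/IH=> a' sz_a' def_a; exists (x :: a'); rewrite /= ?sz_a' ?def_a.
Qed.

Section Monomials.
Variable V : finType.
Implicit Types (M N X Y w : mono V) (x z : V).

Definition mvar2 (x y : V) : mono V := mmul (mvar x) (mvar y).
Definition mlcm M N : mono V := [ffun v => maxn (M v) (N v)].

Lemma mmulC M N : mmul M N = mmul N M.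
Proof. by apply/ffunP=> v; rewrite !ffunE addnC. Qed.

Lemma mmul1m M : mmul (mone V) M = M.
Proof. by apply/ffunP=> v; rewrite !ffunE. Qed.

Lemma mmulI (u : mono V) : injective (fun M => mmul M u).
Proof.
by move=> M N /ffunP eq_MN; apply/ffunP=> v; have := eq_MN v; rewrite !ffunE => /addIn.
Qed.

Lemma mvar2E x y v : mvar2 x y v = (v == x) + (v == y).
Proof. by rewrite !ffunE. Qed.

Lemma mvar2C x y : mvar2 x y = mvar2 y x.
Proof. by apply/ffunP=> v; rewrite !mvar2E addnC. Qed.

Lemma mono_eq_of_mdvd X Y : mdvd X Y -> \sum_v X v = \sum_v Y v -> X = Y.
Proof.
move=> XY sumXY; have /eqP := congr1 (subn^~ (\sum_v X v)) sumXY.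
rewrite subnn -sumnB // eq_sym sum_nat_eq0 => /forallP YX.
by apply/ffunP=> v; apply/eqP; rewrite eqn_leq XY -subn_eq0; exact: YX v.
Qed.

Lemma colon_mmP N M w : colon_mm N M w <-> mdvd (mlcm N M) (mmul w M).
Proof. by split=> H v; have := H v; rewrite !ffunE; lia. Qed.

Lemma colon_mm_var M N x z : x != z -> mmul M (mvar x) = mmul N (mvar z) ->
  forall w, colon_mm N M w <-> 0 < w x.
Proof.
move=> xz /ffunP MN w; split=> [/(_ x)|wx v].
  by have := MN x; rewrite !ffunE eqxx (negbTE xz); lia.
by have := MN v; rewrite !ffunE; case: eqP => [->|]; lia.
Qed.

Lemma principal_mvar x w : principal (mvar x) w <-> 0 < w x.
Proof.
split=> [/(_ x)|w_x v]; rewrite ffunE ?eqxx //.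
by case: eqP => [->|].
Qed.

Lemma colon_mm_mvar N M x w : M x < N x -> colon_mm N M w -> 0 < w x.
Proof. by move=> lt_x /(_ x); rewrite ffunE; lia. Qed.

End Monomials.

(* Pointwise goals about monomials built from [mmul] and [mvar] are linear in the
   indicators [v == x].  We case on vertex equalities only when lia needs them, and
   clear the context before calling lia, on which zify is otherwise very slow. *)
Ltac atom_lia :=
  repeat match goal with |- context [nat_of_bool ?b] => generalize (nat_of_bool b) => ? end;
  repeat match goal with H : _ |- _ => clear H end;
  lia.

Ltac mono_norm :=
  rewrite ?mvar2E ?ffunE ?eqxx /=;
  repeat match goal with
  | H : is_true (?x != ?y) |- context [?x == ?y] => rewrite (negbTE H)
  | H : is_true (?x != ?y) |- context [?y == ?x] => rewrite [y == x]eq_sym (negbTE H)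
  | |- context [?x == ?y] => match goal with |- context [y == x] => rewrite [y == x]eq_sym end
  end;
  rewrite /=.

Ltac mono_split :=
  first [ atom_lia
        | match goal with H : is_true (?x != ?x) |- _ => by rewrite eqxx in H end
        | match goal with |- context [?a == ?b] =>
            case: (eqVneq a b) => [?|?]; [try subst a|]; mono_norm; mono_split end ].

Ltac mono_lia := mono_norm; mono_split.

Ltac mono_lia_at v :=
  rewrite ?mvar2E ?ffunE;
  repeat match goal with |- context [v == ?b] =>
    case: (eqVneq v b) => [?|?]; [subst v|] end;
  mono_lia.

Ltac mono_ac := apply/ffunP=> ?; rewrite !ffunE; atom_lia.

Section Expressions.
Variables (V : finType) (L : seq {set V}).
Implicit Types (M : mono V) (a : seq nat).

Definition edge_prod m M := exists a, is_expr L m M a.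

Lemma prod_expr_incr a i : i < size L ->
  prod_expr L (incr_nth a i) = mmul (prod_expr L a) (edge_mono (nth set0 L i)).
Proof.
move=> lt_iL; apply/ffunP=> v; rewrite !ffunE.
under eq_bigr do rewrite nth_incr_nth mulnDl.
rewrite big_split /= addnC; congr (_ + _).
rewrite (bigD1 (Ordinal lt_iL)) //= eqxx mul1n big1 ?addn0 // => k.
by rewrite -val_eqE eq_sym => /negbTE ->.
Qed.

Lemma is_expr_incr m M a i : is_expr L m M a -> i < size L ->
  is_expr L m.+1 (mmul M (edge_mono (nth set0 L i))) (incr_nth a i).
Proof.
case=> sz_a sum_a <- lt_iL; split; last exact: prod_expr_incr.
- by rewrite size_incr_nth sz_a lt_iL.
- by rewrite sumn_incr_nth sum_a.
Qed.

Lemma is_expr_decr m M a i : is_expr L m M a -> 0 < nth 0 a i ->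
  exists m' a', [/\ m = m'.+1, is_expr L m' (prod_expr L a') a' &
    M = mmul (prod_expr L a') (edge_mono (nth set0 L i))].
Proof.
case=> sz_a sum_a <- a_i; have [a' sz_a' def_a] := incr_nth_pred a_i.
have lt_iL : i < size L by rewrite -sz_a ltnNge; apply: contraTN a_i => /(nth_default 0) ->.
exists (sumn a'), a'; split=> //; last by rewrite def_a prod_expr_incr.
- by rewrite -sum_a def_a sumn_incr_nth.
- by split=> //; rewrite sz_a'.
Qed.

Lemma edge_prod_mone : edge_prod 0 (mone V).
Proof.
exists (nseq (size L) 0); split; first by rewrite size_nseq.
- by elim: (size L) => //= k ->.
- by apply/ffunP=> v; rewrite !ffunE big1 // => k _; rewrite nth_nseq if_same.
Qed.

Lemma edge_prod_mul m M u : u \in map (@edge_mono V) L -> edge_prod m M ->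
  edge_prod m.+1 (mmul M u).
Proof.
case/mapP=> S /(nthP set0) [i lt_iL <-] -> [a expr_a].
by exists (incr_nth a i); apply: is_expr_incr.
Qed.

Lemma edge_prod_pow m M W : edge_prod m M -> mdvd M W -> pow_ideal L m W.
Proof. by case=> a [sz_a sum_a <-] MW; exists a. Qed.

Lemma colon_mm_sub_pow m N M : pow_ideal L m (mlcm N M) ->
  msubset (colon_mm N M) (colon (pow_ideal L m) M).
Proof.
case=> a [sz_a sum_a dvd_a] w /colon_mmP lcm_w.
by exists a; split=> // v; apply: leq_trans (dvd_a v) (lcm_w v).
Qed.

Definition edge_factor n M i := exists2 G, edge_prod n G & M = mmul (Ledge L i) G.

Lemma edge_factor_of_expr n M a i : is_expr L n.+1 M a -> 0 < nth 0 a i ->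
  edge_factor n M i.+1.
Proof.
move=> expr_a a_i; have [m [a' [[<-] expr_a' ->]]] := is_expr_decr expr_a a_i.
by exists (prod_expr L a'); [exists a' | rewrite mmulC].
Qed.

Lemma expr_of_edge_factor n M i : edge_factor n M i.+1 -> i < size L ->
  exists2 g, is_expr L n.+1 M g & 0 < nth 0 g i.
Proof.
case=> G [g expr_g] -> lt_iL; exists (incr_nth g i); last by rewrite nth_incr_nth eqxx.
by rewrite mmulC; apply: is_expr_incr.
Qed.

End Expressions.

Section GraphEdges.
Variables (V : finType) (L : seq {set V}).
Hypothesis L_pairs : forall S, S \in L -> exists p q, p != q /\ S = [set p; q].
Local Notation edges := (map (@edge_mono V) L).
Implicit Types (M F : mono V) (x y z a b c p q : V).

Lemma edge_mono_pair (p q : V) : p != q -> edge_mono [set p; q] = mvar2 p q.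
Proof.
move=> pq; apply/ffunP=> v; rewrite mvar2E ffunE !inE.
by case: (eqVneq v p) => [->|]; rewrite ?(negbTE pq) ?orbF.
Qed.

Lemma edge_prod_split m M x : edge_prod L m M -> 0 < M x ->
  exists m' c M', [/\ m = m'.+1, x != c, mvar2 x c \in edges,
    edge_prod L m' M' & M = mmul M' (mvar2 x c)].
Proof.
case=> a expr_a M_x.
have /existsP [k /andP [a_k x_k]] :
    [exists k : 'I_(size L), (0 < nth 0 a k) && (x \in nth set0 L k)].
  apply: contraTT M_x => /existsPn none; case: expr_a => _ _ <-.
  rewrite ffunE -leqNgt leqn0 sum_nat_eq0; apply/forallP=> k /=.
  have := none k; rewrite negb_and -!leqNgt leqn0.
  by case/orP=> [/eqP->|/negbTE->]; rewrite ?muln0.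
have [m' [a' [-> expr_a' ->]]] := is_expr_decr expr_a a_k.
have [c [xc def_k]] : exists c, x != c /\ nth set0 L k = [set x; c].
  have [p [q [pq def_k]]] := L_pairs (mem_nth set0 (ltn_ord k)).
  move: x_k; rewrite def_k !inE => /orP [/eqP->|/eqP->]; first by exists q.
  by exists p; rewrite eq_sym setUC.
exists m', c, (prod_expr L a'); split=> //; last by rewrite def_k edge_mono_pair.
- by apply/mapP; exists [set x; c]; rewrite ?edge_mono_pair // -def_k mem_nth.
- by exists a'.
Qed.

Lemma edge_prod_degree m M : edge_prod L m M -> \sum_v M v = 2 * m.
Proof.
case=> a [sz_a <- <-]; under eq_bigr do rewrite ffunE.
rewrite exchange_big sumnE (big_nth 0) big_mkord sz_a big_distrr /=.
apply: eq_bigr => k _; rewrite -big_distrr /= mulnC; congr (_ * _).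
have [p [q [pq ->]]] := L_pairs (mem_nth set0 (ltn_ord k)).
have -> : 2 = #|[set p; q]| by rewrite cards2 pq.
rewrite -sum1_card [RHS]big_mkcond /=.
by apply: eq_bigr => v _; case: (v \in _).
Qed.

Lemma edge_prod0 M : edge_prod L 0 M -> M = mone V.
Proof.
move=> M0; apply/esym/mono_eq_of_mdvd => [v|]; first by rewrite ffunE.
by rewrite (edge_prod_degree M0) big1 // => v _; rewrite ffunE.
Qed.

Lemma mingen_edge_prod m M : mingen L m M <-> edge_prod L m M.
Proof.
split=> [[[a [sz_a sum_a dvd_a]] min_M]|M_m].
  have a_m : edge_prod L m (prod_expr L a) by exists a.
  by rewrite -(min_M _ (edge_prod_pow a_m (fun v => leqnn _)) dvd_a).
split=> [|M' [b [sz_b sum_b dvd_b]] M'M]; first exact: edge_prod_pow M_m (fun v => leqnn _).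
have b_m : edge_prod L m (prod_expr L b) by exists b.
have eq_bM : prod_expr L b = M.
  apply: mono_eq_of_mdvd; first by move=> v; apply: leq_trans (dvd_b v) (M'M v).
  by rewrite (edge_prod_degree b_m) (edge_prod_degree M_m).
by apply/ffunP=> v; apply/eqP; rewrite eqn_leq M'M -eq_bM dvd_b.
Qed.

Variant exchange_spec (n : nat) (e F M : mono V) : Prop :=
  | ExchangeEven x y of mdvd (mmul M (mvar2 x y)) (mlcm (mmul e F) M)
      & edge_prod L n.+2 (mmul M (mvar2 x y))
  | ExchangeVar x z G of M x < mmul e F x & edge_prod L n G
      & mmul M (mvar x) = mmul (mmul e G) (mvar z)
  | ExchangeEdge G of edge_prod L n G & M = mmul e G.
Arguments ExchangeEven {n e F M} x y.
Arguments ExchangeVar {n e F M} x z {G}.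
Arguments ExchangeEdge {n e F M G}.

Lemma exchange_lt n p q F M : p != q -> mvar2 p q \in edges ->
  edge_prod L n F -> edge_prod L n.+1 M -> M p < mmul (mvar2 p q) F p ->
  exchange_spec n (mvar2 p q) F M.
Proof.
move=> pq pq_edge F_n M_n Mp.
case: (ltnP (M q) (mmul (mvar2 p q) F q)) => Mq.
  apply: (ExchangeEven p q); last exact: edge_prod_mul.
  by move=> v; move: Mp Mq; mono_lia_at v.
have M_q : 0 < M q by move: Mq; mono_lia.
have [m [t [M' [[<-] qt _ M'_n def_M]]]] := edge_prod_split M_n M_q; subst M.
case: (eqVneq t p) => [->|tp].
  by apply: (ExchangeEdge M'_n); apply/ffunP=> v; mono_lia_at v.
apply: (ExchangeVar p t _ M'_n); first by move: Mp; mono_lia.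
by apply/ffunP=> v; mono_lia_at v.
Qed.

Lemma exchange_spec_mul n e F M a b c : a != b ->
  mvar2 a b \in edges -> mvar2 b c \in edges ->
  mmul M (mvar2 b c) a < mmul e (mmul F (mvar2 a b)) a ->
  exchange_spec n e F M -> exchange_spec n.+1 e (mmul F (mvar2 a b)) (mmul M (mvar2 b c)).
Proof.
move=> ab ab_edge bc_edge Ma [x y xy_lcm xy_n|x z G Mx G_n def_Mx|G G_n ->].
- case: (eqVneq x c) => [xc|xc].
    subst c; apply: (ExchangeEven a y).
      by move=> v; move: (xy_lcm v) Ma; mono_lia_at v.
    suff -> : mmul (mmul M (mvar2 b x)) (mvar2 a y) = mmul (mmul M (mvar2 x y)) (mvar2 a b).
      exact: edge_prod_mul.
    by mono_ac.
  case: (eqVneq y c) => [yc|yc].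
    subst c; apply: (ExchangeEven x a).
      by move=> v; move: (xy_lcm v) Ma; mono_lia_at v.
    suff -> : mmul (mmul M (mvar2 b y)) (mvar2 x a) = mmul (mmul M (mvar2 x y)) (mvar2 a b).
      exact: edge_prod_mul.
    by mono_ac.
  apply: (ExchangeEven x y); first by move=> v; move: (xy_lcm v); mono_lia_at v.
  suff -> : mmul (mmul M (mvar2 b c)) (mvar2 x y) = mmul (mmul M (mvar2 x y)) (mvar2 b c).
    exact: edge_prod_mul.
  by mono_ac.
- have /ffunP Mx_v := def_Mx; case: (eqVneq x c) => [xc|xc].
    subst c; apply: (ExchangeVar a z Ma (edge_prod_mul ab_edge G_n)).
    by apply/ffunP=> v; move: (Mx_v v); mono_lia_at v.
  apply: (ExchangeVar x z _ (edge_prod_mul bc_edge G_n)); first by move: Mx; mono_lia.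
  by apply/ffunP=> v; move: (Mx_v v); mono_lia_at v.
- apply: (ExchangeEdge (G := mmul G (mvar2 b c))); first exact: edge_prod_mul.
  by mono_ac.
Qed.

Lemma edge_prod_exchange n p q F M : p != q -> mvar2 p q \in edges ->
  edge_prod L n F -> edge_prod L n.+1 M -> exchange_spec n (mvar2 p q) F M.
Proof.
elim/ltn_ind: n F M => n IH F M pq pq_edge F_n M_n.
case: (ltnP (M p) (mmul (mvar2 p q) F p)) => Mp; first exact: exchange_lt.
case: (ltnP (M q) (mmul (mvar2 p q) F q)) => Mq.
  by rewrite mvar2C; apply: exchange_lt; rewrite 1?eq_sym -1?mvar2C.
case: (pickP (fun v => M v < mmul (mvar2 p q) F v)) => [a Ma|M_ge]; last first.
  apply: (ExchangeEdge F_n); apply/esym/mono_eq_of_mdvd => [v|].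
    by rewrite leqNgt M_ge.
  have N_n : edge_prod L n.+1 (mmul (mvar2 p q) F) by rewrite mmulC; apply: edge_prod_mul.
  by rewrite (edge_prod_degree N_n) (edge_prod_degree M_n).
(* Some a off {p, q} has M_a < N_a, so a lies on an edge ab of F.  Either ab can be added
   to M, or b lies on an edge bc of M and we recurse on F / ab and M / bc. *)
have {}Ma : M a < mmul (mvar2 p q) F a := Ma.
have F_a : 0 < F a by move: Ma Mp Mq; mono_lia.
have [n' [b [F' [def_n ab ab_edge F'_n' def_F]]]] := edge_prod_split F_n F_a.
subst n F; case: (ltnP (M b) (mmul (mvar2 p q) (mmul F' (mvar2 a b)) b)) => Mb.
  apply: (ExchangeEven a b); last exact: edge_prod_mul.
  by move=> v; move: Ma Mb; mono_lia_at v.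
have M_b : 0 < M b by move: Mb; mono_lia.
have [m [c [M' [[def_m] bc bc_edge M'_n' def_M]]]] := edge_prod_split M_n M_b.
subst m M; apply: exchange_spec_mul => //.
exact: IH.
Qed.

Lemma Ledge_pair i : 0 < i <= size L ->
  exists p q, [/\ p != q, mvar2 p q \in edges & Ledge L i = mvar2 p q].
Proof.
case/andP=> i_gt0 i_le; have lt_iL : i.-1 < size L by rewrite prednK.
have [p [q [pq def_i]]] := L_pairs (mem_nth set0 lt_iL).
exists p, q; rewrite /Ledge def_i edge_mono_pair //; split=> //.
by apply/mapP; exists (nth set0 L i.-1); rewrite ?mem_nth ?def_i ?edge_mono_pair.
Qed.

End GraphEdges.

Section Belongs.
Variables (V : finType) (L : seq {set V}).
Hypothesis L_pairs : forall S, S \in L -> exists p q, p != q /\ S = [set p; q].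
Hypothesis L_uniq : uniq L.
Implicit Types (M G : mono V).

Lemma Ledge_inj i j : 0 < i <= size L -> 0 < j <= size L ->
  Ledge L i = Ledge L j -> i = j.
Proof.
move=> /andP [i_gt0 i_le] /andP [j_gt0 j_le] /ffunP eq_ij.
have /eqP : nth set0 L i.-1 = nth set0 L j.-1.
  by apply/setP=> v; have := eq_ij v; rewrite !ffunE; do 2 case: (v \in _).
by rewrite nth_uniq ?prednK // => /eqP/(congr1 succn); rewrite !prednK.
Qed.

Lemma edge_prod_Ledge_mul n G i : 0 < i <= size L -> edge_prod L n G ->
  edge_prod L n.+1 (mmul (Ledge L i) G).
Proof.
case/(Ledge_pair L_pairs)=> p [q [_ pq_edge ->]] G_n.
by rewrite mmulC; apply: edge_prod_mul.
Qed.

Lemma edge_dvd_factor n M i : 0 < i <= size L -> mingen L n.+1 M ->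
  edge_dvd L 1 (Ledge L i) n.+1 M <-> edge_factor L n M i.
Proof.
move=> i_rng M_n; rewrite /edge_dvd subSS subn0.
split=> [[_ _ [G [G_n ->]]]|[G G_n def_M]].
  by exists G => //; apply/(mingen_edge_prod L_pairs).
split=> //; first apply/(mingen_edge_prod L_pairs).
  by have := edge_prod_Ledge_mul i_rng (edge_prod_mone L); rewrite mmulC mmul1m.
by exists G; split; rewrite // (mingen_edge_prod L_pairs).
Qed.

Lemma edge_factor0 M i : edge_factor L 0 M i <-> M = Ledge L i.
Proof.
split=> [[G /(edge_prod0 L_pairs) -> ->]|->]; first by rewrite mmulC mmul1m.
by exists (mone V); [apply: edge_prod_mone | rewrite mmulC mmul1m].
Qed.

Lemma belongsP n M b : edge_prod L n.+1 M ->
  belongs L n.+1 M b <->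
  [/\ 0 < b <= size L, edge_factor L n M b & forall i, 0 < i < b -> ~ edge_factor L n M i].
Proof.
move=> M_n; have in_range i : 0 < i < b -> 0 < b <= size L -> 0 < i <= size L.
  by case/andP=> i_gt0 lt_ib /andP [_ b_le]; rewrite i_gt0 (leq_trans (ltnW lt_ib)).
case: n M_n => [|n] M_n; rewrite /belongs /=.
  split=> [[b_rng def_M]|[b_rng /edge_factor0 def_M _]] //.
  split=> // [|i i_rng /edge_factor0 M_i]; first exact/edge_factor0.
  have eq_ib := Ledge_inj (in_range i i_rng b_rng) b_rng (etrans (esym M_i) def_M).
  by move: i_rng; rewrite eq_ib ltnn andbF.
have Mg : mingen L n.+2 M by apply/(mingen_edge_prod L_pairs).
split=> [[b_rng [/(edge_dvd_factor b_rng Mg) M_b min_b]]|[b_rng M_b min_b]].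
  by split=> // i i_rng /(edge_dvd_factor (in_range i i_rng b_rng) Mg); apply: min_b.
split=> //; split=> [|i i_rng]; first exact/(edge_dvd_factor b_rng Mg).
by move/(edge_dvd_factor (in_range i i_rng b_rng) Mg); apply: min_b.
Qed.

Lemma belongs_expr_zero n M b e k : belongs L n.+1 M b -> is_expr L n.+1 M e ->
  k < b.-1 -> nth 0 e k = 0.
Proof.
move=> M_b expr_e lt_kb; have M_n : edge_prod L n.+1 M by exists e.
have [_ _ min_b] := (belongsP _ M_n).1 M_b.
apply/eqP; rewrite -leqn0 leqNgt; apply/negP=> e_k.
by apply: (min_b k.+1); [lia | exact: edge_factor_of_expr expr_e e_k].
Qed.

Lemma belongs_exists n G a : edge_prod L n G -> 0 < a <= size L ->
  exists2 c, c <= a & belongs L n.+1 (mmul (Ledge L a) G) c.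
Proof.
move=> G_n a_rng; have M_n := edge_prod_Ledge_mul a_rng G_n.
set M := mmul (Ledge L a) G in M_n *.
pose P i := 0 < i /\ edge_factor L n M i.
have Pa : P a by split; [case/andP: a_rng | exists G].
have [c [[[c_gt0 M_c] c_min] _]] :=
  dec_inh_nat_subset_has_unique_least_element P (fun i => classic (P i)) (ex_intro _ a Pa).
have le_ca : c <= a by apply/leP/c_min.
exists c => //; apply/(belongsP _ M_n); split=> // [|i /andP [i_gt0 lt_ic] M_i].
  by rewrite c_gt0 (leq_trans le_ca) //; case/andP: a_rng.
by move/leP: (c_min i (conj i_gt0 M_i)); rewrite leqNgt lt_ic.
Qed.

Lemma gens_index_lt n s k M0 a b : gens_list L n.+1 s -> k < size s ->
  belongs L n.+1 (nth (mone V) s k) b -> M0 \in s -> edge_factor L n M0 a ->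
  0 < a -> a < b -> index M0 s < k.
Proof.
move=> [_ s_gens s_sorted] lt_ks M_b M0_s M0_a a_gt0 lt_ab.
have M_n : edge_prod L n.+1 (nth (mone V) s k).
  exact/(mingen_edge_prod L_pairs)/(s_gens _).1/mem_nth.
have [/andP [_ b_le] _ min_b] := (belongsP _ M_n).1 M_b.
rewrite ltnNge leq_eqVlt negb_or; apply/andP; split.
  apply/eqP=> idx_k; apply: (min_b a); first by rewrite a_gt0.
  by rewrite idx_k nth_index.
apply/negP=> lt_k_M0; have := s_sorted k (index M0 s); rewrite lt_k_M0 index_mem M0_s.
case/(_ isT)=> aM [aM0 [[expr_aM _] [_ max_aM0] lt_aM0_aM]].
rewrite nth_index // in max_aM0.
have lt_aL : a.-1 < size L by lia.
rewrite -(prednK a_gt0) in M0_a.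
have [g expr_g g_pos] := expr_of_edge_factor M0_a lt_aL.
apply: (negP (max_aM0 g expr_g)).
apply: (lexlt_shift (t := b.-1) lt_aM0_aM _ _ g_pos); last by lia.
by move=> i; apply: belongs_expr_zero M_b expr_aM.
Qed.

Lemma earlier_gen_colon_var n s k b a G x z :
  gens_list L n.+1 s -> k < size s -> belongs L n.+1 (nth (mone V) s k) b ->
  0 < a -> a < b -> edge_prod L n G ->
  mmul (nth (mone V) s k) (mvar x) = mmul (mmul (Ledge L a) G) (mvar z) ->
  exists i c, [/\ 0 < i <= k, forall w, colon_mm (Lg s i) (nth (mone V) s k) w <-> 0 < w x,
                 belongs L n.+1 (Lg s i) c & c <= a].
Proof.
move=> gens_s lt_ks M_b a_gt0 lt_ab G_n def_Mx; have [_ s_gens _] := gens_s.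
set M := nth (mone V) s k in M_b def_Mx *; set L0 := mmul (Ledge L a) G in def_Mx.
have M_n : edge_prod L n.+1 M by apply/(mingen_edge_prod L_pairs)/s_gens/mem_nth.
have [b_rng _ min_b] := (belongsP _ M_n).1 M_b.
have a_rng : 0 < a <= size L by rewrite a_gt0 (leq_trans (ltnW lt_ab)) ?(andP b_rng).2.
have L0_a : edge_factor L n L0 a by exists G.
have L0_s : L0 \in s by apply/s_gens/(mingen_edge_prod L_pairs)/edge_prod_Ledge_mul.
have xz : x != z.
  apply/eqP=> eq_xz; rewrite eq_xz in def_Mx; apply: (min_b a); first by rewrite a_gt0.
  by rewrite (mmulI def_Mx).
have [c le_ca L0_c] := belongs_exists G_n a_rng.
exists (index L0 s).+1, c; rewrite /Lg /= nth_index //; split=> //.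
  exact: (gens_index_lt gens_s lt_ks M_b L0_s L0_a a_gt0 lt_ab).
exact: colon_mm_var xz def_Mx.
Qed.

End Belongs.

Lemma edge_order_pairs (V : finType) (e : rel V) (L : seq {set V}) :
  simple_graph e -> edge_order e L ->
  forall S, S \in L -> exists p q, p != q /\ S = [set p; q].
Proof.
move=> [e_irr _] [_ L_edges] S /L_edges [p [q [e_pq ->]]].
by exists p, q; split=> //; apply: contraTneq e_pq => ->; rewrite e_irr.
Qed.

Theorem lemma4p11 (V : finType) (e : rel V) (L : seq {set V})
  (n : nat) (s : seq (mono V)) (k' j : nat) (a b : nat) :
  simple_graph e -> edge_order e L ->
  1 <= n -> gens_list L n s ->
  1 <= k' -> 1 <= j <= k' -> k' < size s ->
  ~ msubset (colon_mm (Lg s j) (Lg s k'.+1))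
            (colon (pow_ideal L n.+1) (Lg s k'.+1)) ->
  belongs L n (Lg s j) a -> belongs L n (Lg s k'.+1) b -> a < b ->
  exists i c,
    [/\ 1 <= i <= k',
        gen_by_var (colon_mm (Lg s i) (Lg s k'.+1)),
        msubset (colon_mm (Lg s j) (Lg s k'.+1)) (colon_mm (Lg s i) (Lg s k'.+1)),
        belongs L n (Lg s i) c & c <= a].
Proof.
move=> simple_e order_L n_gt0 gens_s _ /andP [j_gt0 le_jk] lt_ks not_sub N_a M_b lt_ab.
have L_pairs := edge_order_pairs simple_e order_L; have L_uniq := order_L.1.
case: n n_gt0 gens_s not_sub N_a M_b => // n _ gens_s not_sub N_a M_b.
have [_ s_gens _] := gens_s.
have mem_s i : i < size s -> edge_prod L n.+1 (nth (mone V) s i).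
  by move=> lt_is; apply/(mingen_edge_prod L_pairs)/s_gens/mem_nth.
set N := Lg s j in not_sub N_a *; set M := Lg s k'.+1 in not_sub M_b *.
have N_n : edge_prod L n.+1 N by apply: mem_s; lia.
have M_n : edge_prod L n.+1 M := mem_s k' lt_ks.
have [a_rng [G G_n def_N] _] := (belongsP L_pairs L_uniq _ N_n).1 N_a.
have [p [q [pq pq_edge La]]] := Ledge_pair L_pairs a_rng.
rewrite La in def_N.
case: (edge_prod_exchange L_pairs pq pq_edge G_n M_n)
  => [x y xy_lcm xy_n|x z G0 lt_x G0_n def_Mx|G' G'_n def_M].
- case: not_sub; rewrite def_N; apply: colon_mm_sub_pow.
  exact: edge_prod_pow xy_n xy_lcm.
- rewrite -La in def_Mx.
  have [i [c [i_rng colon_i L_i le_ca]]] := earlier_gen_colon_var L_pairs L_uniq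
    gens_s lt_ks M_b (andP a_rng).1 lt_ab G0_n def_Mx.
  exists i, c; split=> //; first by exists x => w; rewrite principal_mvar colon_i.
  by move=> w; rewrite def_N colon_i => /(colon_mm_mvar lt_x).
- have [_ _ min_b] := (belongsP L_pairs L_uniq _ M_n).1 M_b.
  by case: (min_b a); [rewrite lt_ab (andP a_rng).1 | exists G'; rewrite ?La].
Qed.
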